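(* Under 2-Approval, $2$-by-$2$ GS-games of type (i) and of type (vi) are both realizable: for each of these two types there exist a finite candidate set $C$, a tie-breaking order on $C$, a profile $V$ and a $2$-by-$2$ GS-game for $V$ under 2-Approval of that type.
   Context: Each voter $i$ has a strict linear order $v_i$ over $C$. 2-Approval: each candidate gets one point from each voter ranking her among his top two; the highest score wins, ties broken in favour of the candidate highest in a fixed strict linear order $>$ on $C$. Write $\mathcal{R}$ for the rule and $(V_{-i},v_i')$ for $V$ with $v_i$ replaced by $v_i'$. A GS-manipulation of voter $i$ at $V$ is a vote $v_i'$ such that $i$ strictly prefers $\mathcal{R}(V_{-i},v_i')$ to $\mathcal{R}(V)$ and for every vote $v_i''$ either $\mathcal{R}(V_{-i},v_i'')=\mathcal{R}(V_{-i},v_i')$ or $i$ strictly prefers $\mathcal{R}(V_{-i},v_i')$ to $\mathcal{R}(V_{-i},v_i'')$; $i$ is a GS-manipulator if he has one. A GS-game for $V$ has as players all GS-manipulators at $V$, each player $i$ having action set consisting of $v_i$ and a subset of his GS-manipulations; other voters vote sincerely. A $2$-by-$2$ GS-game is one with exactly two players $1,2$, with action sets $\{s_1,i_1\}$, $\{s_2,i_2\}$, $s_p=v_p$ sincere and $i_p$ a GS-manipulation. Let $W(a,b)$ be the winner when player 1 plays $a$ and player 2 plays $b$. Set $\rho_1=+$ if player 1 strictly prefers $W(i_1,i_2)$ to $W(s_1,i_2)$, $0$ if they are equal, $-$ if he strictly prefers $W(s_1,i_2)$; define $\rho_2$ analogously for player 2 comparing $W(i_1,i_2)$ with $W(i_1,s_2)$.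 Type (i) means $\{\rho_1,\rho_2\}=\{+,+\}$; type (vi) means $\{\rho_1,\rho_2\}=\{+,-\}$. *)

From mathcomp Require Import all_boot.
Set Implicit Arguments. Unset Strict Implicit. Unset Printing Implicit Defensive.

Section Voting.
Variables (C I : finType).

(* A strict linear order on C, given as a boolean relation: [v a b] means
   "a is strictly preferred to (ranked above) b". *)
Definition strict_linear_order (v : rel C) : Prop :=
  [/\ irreflexive v, transitive v & forall a b, a != b -> v a b || v b a].

Definition profile := I -> rel C.

Definition profile_ok (V : profile) : Prop := forall i, strict_linear_order (V i).

Definition upd (V : profile) (i : I) (v' : rel C) : profile :=
  fun j => if j == i then v' else V j.

Definition top2 (v : rel C) (c : C) : bool := #|[set d | v d c]| < 2.

Definition score (V : profile) (c : C) : nat := #|[set j | top2 (V j) c]|.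

(* 2-Approval winner with ties broken by the strict linear order [tie]
   (tie a b : a is above b in the tie-breaking order). Returns None only
   when C is empty. *)
Definition winner (tie : rel C) (V : profile) : option C :=
  [pick c | [forall d, (d != c) ==>
      ((score V d < score V c) || ((score V d == score V c) && tie c d))]].

Definition prefers (v : rel C) (a b : option C) : bool :=
  match a, b with Some x, Some y => v x y | _, _ => false end.

Definition GS_manipulation (tie : rel C) (V : profile) (i : I) (v' : rel C) : Prop :=
  [/\ strict_linear_order v',
      prefers (V i) (winner tie (upd V i v')) (winner tie V) &
      forall v'', strict_linear_order v'' ->
        winner tie (upd V i v'') = winner tie (upd V i v') \/
        prefers (V i) (winner tie (upd V i v')) (winner tie (upd V i v''))].

Definition GS_manipulator (tie : rel C) (V : profile) (i : I) : Prop :=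
  exists v', GS_manipulation tie V i v'.

Definition W2 (tie : rel C) (V : profile) (p1 p2 : I) (a b : rel C) : option C :=
  winner tie (upd (upd V p1 a) p2 b).

(* A 2-by-2 GS-game for V: the GS-manipulators at V are exactly the two
   distinct players p1, p2, with action sets {V p1, i1} and {V p2, i2},
   i1, i2 being GS-manipulations. *)
Definition GS_game_2by2 (tie : rel C) (V : profile) (p1 p2 : I) (i1 i2 : rel C) : Prop :=
  [/\ p1 != p2,
      (forall i, GS_manipulator tie V i <-> (i = p1 \/ i = p2)),
      GS_manipulation tie V p1 i1 &
      GS_manipulation tie V p2 i2].

Inductive sgn := Plus | Zero | Minus.

Definition cmp_sgn (v : rel C) (a b : option C) : sgn :=
  if prefers v a b then Plus else if a == b then Zero else Minus.

Definition rho1 (tie : rel C) (V : profile) (p1 p2 : I) (i1 i2 : rel C) : sgn :=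
  cmp_sgn (V p1) (W2 tie V p1 p2 i1 i2) (W2 tie V p1 p2 (V p1) i2).

Definition rho2 (tie : rel C) (V : profile) (p1 p2 : I) (i1 i2 : rel C) : sgn :=
  cmp_sgn (V p2) (W2 tie V p1 p2 i1 i2) (W2 tie V p1 p2 i1 (V p2)).

Definition type_i tie V p1 p2 i1 i2 : Prop :=
  rho1 tie V p1 p2 i1 i2 = Plus /\ rho2 tie V p1 p2 i1 i2 = Plus.

Definition type_vi tie V p1 p2 i1 i2 : Prop :=
  (rho1 tie V p1 p2 i1 i2 = Plus /\ rho2 tie V p1 p2 i1 i2 = Minus) \/
  (rho1 tie V p1 p2 i1 i2 = Minus /\ rho2 tie V p1 p2 i1 i2 = Plus).

End Voting.

From mathcomp Require Import all_boot.
Set Implicit Arguments. Unset Strict Implicit. Unset Printing Implicit Defensive.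

(* Under 2-Approval a vote influences the outcome only through the two
   candidates it approves.  Hence what a voter can achieve by deviating is
   read off the finitely many approved pairs, and being a GS-manipulation
   becomes a finite check.  Both games are realized with six candidates and
   two voters, where all these checks are decided by computation. *)

Section Enumeration.
Variable T : finType.
Implicit Type P : pred T.

Lemma card_set_count P : #|[set x | P x]| = count P (enum T).
Proof. by rewrite cardsE cardE enumT /enum_mem size_filter. Qed.

Lemma forall_all P : [forall x, P x] = all P (enum T).
Proof.
by apply/forallP/allP => [PT x _ | Penum x] //; apply: Penum; rewrite mem_enum.
Qed.

Lemma pick_filter P : [pick x | P x] = ohead (filter P (enum T)).
Proof. by rewrite enumT. Qed.

End Enumeration.

Section TwoApproval.
Variables (C I : finType) (tie : rel C).

Definition rank (v : rel C) (c : C) : nat := #|[set d | v d c]|.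

Section Rank.
Variable v : rel C.
Hypothesis v_slo : strict_linear_order v.

Lemma rank_lt_card c : rank v c < #|C|.
Proof.
case: v_slo => irr _ _; rewrite /rank -cardsT; apply: proper_card.
by apply/properP; split; [exact: subsetT | exists c; rewrite ?inE ?irr].
Qed.

Lemma rank_mono a b : v a b -> rank v a < rank v b.
Proof.
case: v_slo => irr tr _ vab; apply: proper_card; apply/properP; split.
  by apply/subsetP => d; rewrite !inE => /tr; apply.
by exists a; rewrite !inE ?irr.
Qed.

Lemma rank_inj : injective (rank v).
Proof.
case: v_slo => _ _ tot a b eq_rank; apply/eqP; apply: contraT => /tot.
by case/orP=> /rank_mono; rewrite eq_rank ltnn.
Qed.

Lemma rank_onto k : k < #|C| -> exists c, rank v c = k.
Proof.
move=> lt_k; pose f c : 'I_#|C| := Ordinal (rank_lt_card c).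
have f_inj : injective f by move=> a b /(congr1 val) /rank_inj.
have /codomP [c /(congr1 val) /= ->] :=
  inj_card_onto f_inj (eq_leq (card_ord _)) (Ordinal lt_k).
by exists c.
Qed.

End Rank.

Lemma top2_pair (v : rel C) : strict_linear_order v -> 1 < #|C| ->
  exists a b, a != b /\ top2 v =1 pred2 a b.
Proof.
move=> v_slo C_gt1; have [a rank_a] := rank_onto v_slo (ltnW C_gt1).
have [b rank_b] := rank_onto v_slo C_gt1.
exists a, b; split; first by apply/eqP => a_b; move: rank_a; rewrite a_b rank_b.
move=> c; rewrite /top2 -/(rank v c) /= -(inj_eq (rank_inj v_slo)) rank_a.
by rewrite -(inj_eq (rank_inj v_slo)) rank_b; case: (rank v c) => [|[|]].
Qed.

Definition top2_in (cs : seq C) (v : rel C) : pred C := fun c => count (v^~ c) cs < 2.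

Definition approval_winner (cs : seq C) (vs : seq I) (A : I -> pred C) : option C :=
  let score c := count (A^~ c) vs in
  ohead [seq c <- cs | all (fun d => (d != c) ==>
    ((score d < score c) || ((score d == score c) && tie c d))) cs].

Lemma top2E (v : rel C) : top2 v =1 top2_in (enum C) v.
Proof. by move=> c; rewrite /top2 card_set_count. Qed.

Lemma winner_approvals (V : profile C I) (A : I -> pred C) :
  (forall j, top2 (V j) =1 A j) -> winner tie V = approval_winner (enum C) (enum I) A.
Proof.
move=> VA; have scoreA c : score V c = count (A^~ c) (enum I).
  by rewrite /score card_set_count; apply: eq_count => j; rewrite /= VA.
rewrite /winner pick_filter; congr ohead; apply: eq_filter => c.
by rewrite forall_all; apply: eq_all => d; rewrite !scoreA.
Qed.

Lemma winnerE (V : profile C I) :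
  winner tie V = approval_winner (enum C) (enum I) (fun j => top2_in (enum C) (V j)).
Proof. by apply: winner_approvals => j; apply: top2E. Qed.

Definition deviation_winner (V : profile C I) (p : I) (B : pred C) : option C :=
  approval_winner (enum C) (enum I)
    (fun j => if j == p then B else top2_in (enum C) (V j)).

Lemma GS_manipulation_of_pairs (V : profile C I) (p : I) (v' : rel C) :
  1 < #|C| -> strict_linear_order v' ->
  prefers (V p) (winner tie (upd V p v')) (winner tie V) ->
  all2rel (fun a b => (a != b) ==>
    let w := deviation_winner V p (pred2 a b) in
    (w == winner tie (upd V p v')) || prefers (V p) (winner tie (upd V p v')) w)
    (enum C) ->
  GS_manipulation tie V p v'.
Proof.
move=> C_gt1 v'_slo better /allrelP pairs_worse; split=> // v'' v''_slo.
have [a [b [neq_ab top2_ab]]] := top2_pair v''_slo C_gt1.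
have -> : winner tie (upd V p v'') = deviation_winner V p (pred2 a b).
  apply: winner_approvals => j c; rewrite /upd; case: (j == p) => //.
  exact: top2E.
have := pairs_worse a b (mem_enum _ a) (mem_enum _ b); rewrite neq_ab /=.
by case/orP=> [/eqP ->|]; [left | right].
Qed.

Lemma GS_game_of_two_voters (V : profile C I) (p1 p2 : I) (i1 i2 : rel C) :
  p1 != p2 -> (forall i, i = p1 \/ i = p2) ->
  GS_manipulation tie V p1 i1 -> GS_manipulation tie V p2 i2 ->
  GS_game_2by2 tie V p1 p2 i1 i2.
Proof.
move=> neq_p voters manip1 manip2; split=> // i; split=> [_|]; first exact: voters.
by case=> ->; [exists i1 | exists i2].
Qed.

End TwoApproval.

Definition ranking n (s : seq nat) : rel 'I_n :=
  fun a b => index (val a) s < index (val b) s.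

Lemma ranking_slo n (s : seq nat) :
  perm_eq s (iota 0 n) -> strict_linear_order (ranking s : rel 'I_n).
Proof.
move=> s_perm; split=> [a | b a c | a b neq_ab]; [exact: ltnn | exact: ltn_trans |].
have in_s (x : 'I_n) : val x \in s by rewrite (perm_mem s_perm) mem_iota add0n ltn_ord.
rewrite /ranking -neq_ltn; apply: contra neq_ab => /eqP eq_index.
by apply/eqP/ord_inj; exact: (index_inj 0 (in_s a) (in_s b) eq_index).
Qed.

(* [enum] is locked and does not reduce, so the enumerations of ordinals are
   first unfolded into explicit lists. *)
Ltac compute_outcomes :=
  rewrite /rho1 /rho2 /W2 /deviation_winner ?winnerE !enum_ordSl enum_ord0;
  vm_compute; reflexivity.

Definition tie_order : rel 'I_6 := ranking (iota 0 6).

(* Sincerely, candidates 1, 2, 3 and 5 tie and the tie-break elects 1.  Voter 1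
   can elect 2 by approving {2, 4}; voter 2 can do no better than electing 0 by
   approving {0, 4}.  Jointly they elect 4, so the type of the game is decided
   by whether voter 1 ranks 4 above 0. *)
Definition profile_with (s1 : seq nat) : 'I_2 -> rel 'I_6 :=
  fun j => if j == ord0 then ranking s1 else ranking [:: 3; 5; 4; 0; 2; 1].

Definition manip1 : rel 'I_6 := ranking [:: 2; 4; 1; 0; 3; 5].
Definition manip2 : rel 'I_6 := ranking [:: 0; 4; 3; 5; 2; 1].

Lemma profile_with_ok s1 : perm_eq s1 (iota 0 6) -> profile_ok (profile_with s1).
Proof.
by move=> s1_perm j; rewrite /profile_with; case: ifP => _; apply: ranking_slo.
Qed.

Lemma ord2_cases (i : 'I_2) : i = ord0 \/ i = ord_max.
Proof. by case: i => [[|[|]] // lt_i]; [left | right]; apply: val_inj. Qed.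

Lemma game_with_voter1 s1 : s1 \in [:: [:: 2; 1; 4; 0; 3; 5]; [:: 2; 1; 0; 4; 3; 5]] ->
  GS_game_2by2 tie_order (profile_with s1) ord0 ord_max manip1 manip2.
Proof.
rewrite !inE => /orP [] /eqP ->;
  (apply: GS_game_of_two_voters; [by [] | exact: ord2_cases | |]);
  apply: GS_manipulation_of_pairs; rewrite ?card_ord //; try exact: ranking_slo;
  compute_outcomes.
Qed.

Theorem mainTheorem6 :
  (exists (C I : finType) (tie : rel C) (V : I -> rel C) (p1 p2 : I) (i1 i2 : rel C),
      [/\ strict_linear_order tie, profile_ok V,
          GS_game_2by2 tie V p1 p2 i1 i2 & type_i tie V p1 p2 i1 i2]) /\
  (exists (C I : finType) (tie : rel C) (V : I -> rel C) (p1 p2 : I) (i1 i2 : rel C),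
      [/\ strict_linear_order tie, profile_ok V,
          GS_game_2by2 tie V p1 p2 i1 i2 & type_vi tie V p1 p2 i1 i2]).
Proof.
split.
- exists _, _, tie_order, (profile_with [:: 2; 1; 4; 0; 3; 5]), ord0, ord_max.
  exists manip1, manip2.
  split; [exact: ranking_slo | exact: profile_with_ok | exact: game_with_voter1 |].
  by split; compute_outcomes.
- exists _, _, tie_order, (profile_with [:: 2; 1; 0; 4; 3; 5]), ord0, ord_max.
  exists manip1, manip2.
  split; [exact: ranking_slo | exact: profile_with_ok | exact: game_with_voter1 |].
  by right; split; compute_outcomes.
Qed.
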